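(* Let $P\in\mathbb{R}^N$ and $\delta\in(0,1)$. For every $x\in\mathbb{R}^N$ there are open sets $U_x$, $W_x$ with $x\in\overline{U_x}\cap\overline{W_x}$ such that $S_1(x,y)+P\cdot(x-y)<1+|P|\,r_V(\delta,1)$ for all $y\in U_x$, and $S_1(y,x)+P\cdot(y-x)<1+|P|\,r_V(\delta,1)$ for all $y\in W_x$. Moreover each of the families $\{U_x\}_{x\in\mathbb{R}^N}$ and $\{W_x\}_{x\in\mathbb{R}^N}$ is an open covering of $\mathbb{R}^N$.
   Context: $V:\mathbb{R}^N\to\mathbb{R}^N$ is $\mathbb{Z}^N$-periodic and Lipschitz continuous with Lipschitz constant $L_V$; $r_V(\delta,1)=(1-\delta)/L_V$ (with $r_V=+\infty$ if $L_V=0$). $H(x,p)=|p|+p\cdot V(x)$, $Z(x)=\{p\mid H(x,p)\le1\}$, $\sigma(x,q)=\sup\{p\cdot q\mid p\in Z(x)\}\in[0,+\infty]$. For a Lipschitz curve $\xi:[0,T]\to\mathbb{R}^N$, $\ell_V(\xi)=\int_0^T\sigma(\xi(t),\dot\xi(t))\,dt$, and $S_1(x,y)=\inf\{\ell_V(\xi)\mid \xi$ Lipschitz curve joining $x$ to $y\}$. *)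

From HB Require Import structures.
From mathcomp Require Import all_boot all_order all_algebra.
From mathcomp Require Import all_classical all_reals all_analysis.
Set Implicit Arguments. Unset Strict Implicit. Unset Printing Implicit Defensive.
Import Order.TTheory GRing.Theory Num.Theory.
Import numFieldNormedType.Exports.
Local Open Scope classical_set_scope.
Local Open Scope ring_scope.

Section Defs.
Variables (R : realType) (N : nat).
Notation vec := 'rV[R]_N.

Definition dot (p q : vec) : R := \sum_(i < N) p 0 i * q 0 i.
Definition enorm (p : vec) : R := Num.sqrt (dot p p).

Definition Zperiodic (V : vec -> vec) : Prop :=
  forall (x : vec) (k : 'rV[int]_N), V (x + map_mx (fun z : int => z%:~R) k) = V x.

Definition lipschitz_with (V : vec -> vec) (L : R) : Prop :=
  0 <= L /\ forall x y : vec, enorm (V x - V y) <= L * enorm (x - y).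

Definition rV (L delta : R) : \bar R :=
  if L == 0 then +oo%E else ((1 - delta) / L)%:E.

Definition Ham (V : vec -> vec) (x p : vec) : R := enorm p + dot p (V x).

Definition Zset (V : vec -> vec) (x : vec) : set vec := [set p | Ham V x p <= 1].

Definition sigma (V : vec -> vec) (x q : vec) : \bar R :=
  ereal_sup [set (dot p q)%:E | p in Zset V x].

(* xi : [0,T] -> R^N is a Lipschitz curve joining x to y
   (xi is given as a total function; only its values on [0,T] matter) *)
Definition lip_curve (T : R) (xi : R -> vec) (x y : vec) : Prop :=
  0 <= T /\ xi 0 = x /\ xi T = y /\
  exists K : R, forall s t : R, s \in `[0, T] -> t \in `[0, T] ->
    enorm (xi s - xi t) <= K * `|s - t|.

Definition ellV (V : vec -> vec) (T : R) (xi : R -> vec) : \bar R :=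
  (\int[@lebesgue_measure R]_(t in `[0%R, T]%classic) sigma V (xi t) ('D_1 xi t))%E.

Definition S1 (V : vec -> vec) (x y : vec) : \bar R :=
  ereal_inf [set e | exists (T : R) (xi : R -> vec), lip_curve T xi x y /\ e = ellV V T xi].

End Defs.

From HB Require Import structures.
From mathcomp Require Import all_boot all_order all_algebra.
From mathcomp Require Import all_classical all_reals all_analysis.
From mathcomp Require Import lra ring.
Import Order.TTheory GRing.Theory Num.Theory.
Import numFieldNormedType.Exports.
Local Open Scope classical_set_scope.
Local Open Scope ring_scope.
Set Implicit Arguments. Unset Strict Implicit.

(* The idea is to follow the drift.  On a segment of duration T with constant
   velocity d within 1/2 of V(x), the Lipschitz bound keeps d within unit
   distance of V along the segment when T is small; such velocities have
   sigma <= 1, so S1 is at most T, while |P.(T d)| <= T |P| |d|.  Hence every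
   point of the ball of radius T/2 around x + T V(x) (resp. x - T V(x)) is a
   cheap endpoint (resp. starting point) for x.  We take U_x (resp. W_x) to be
   the interior of the set of cheap endpoints (resp. starting points): these
   balls accumulate at x as T -> 0, and every y lies in the ball attached to
   the point obtained from y by a short drift step, which gives the coverings. *)

Section Euclid.
Variables (R : realType) (N : nat).
Implicit Types p q w : 'rV[R]_N.

Lemma dotC p q : dot p q = dot q p.
Proof. by apply: eq_bigr => i _; rewrite mulrC. Qed.

Lemma dot0l q : dot 0 q = 0.
Proof. by rewrite /dot big1 // => i _; rewrite mxE mul0r. Qed.

Lemma dotDl p q w : dot (p + q) w = dot p w + dot q w.
Proof. by rewrite /dot -big_split; apply: eq_bigr => i _; rewrite !mxE mulrDl. Qed.

Lemma dotZl (c : R) p w : dot (c *: p) w = c * dot p w.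
Proof. by rewrite /dot mulr_sumr; apply: eq_bigr => i _; rewrite !mxE mulrA. Qed.

Lemma dotNl p w : dot (- p) w = - dot p w.
Proof. by rewrite -scaleN1r dotZl mulN1r. Qed.

Lemma dotBl p q w : dot (p - q) w = dot p w - dot q w.
Proof. by rewrite dotDl dotNl. Qed.

Lemma dotZr (c : R) p w : dot w (c *: p) = c * dot w p.
Proof. by rewrite !(dotC w) dotZl. Qed.

Lemma dotNr p w : dot w (- p) = - dot w p.
Proof. by rewrite !(dotC w) dotNl. Qed.

Lemma dotBr p q w : dot w (p - q) = dot w p - dot w q.
Proof. by rewrite !(dotC w) dotBl. Qed.

Lemma dotDr p q w : dot w (p + q) = dot w p + dot w q.
Proof. by rewrite !(dotC w) dotDl. Qed.

Lemma dot_ge0 p : 0 <= dot p p.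
Proof. by apply: sumr_ge0 => i _; rewrite -expr2 sqr_ge0. Qed.

Lemma dot_eq0 p : dot p p = 0 -> p = 0.
Proof.
move=> /eqP; rewrite psumr_eq0; last by move=> i _; rewrite -expr2 sqr_ge0.
move=> /allP p0; apply/rowP => i; rewrite mxE.
by have /(_ (mem_index_enum i)) := p0 i; rewrite implyTb mulf_eq0 orbb => /eqP.
Qed.

Lemma enorm_ge0 p : 0 <= enorm p.
Proof. exact: sqrtr_ge0. Qed.

Lemma enorm_sq p : enorm p ^+ 2 = dot p p.
Proof. by rewrite sqr_sqrtr // dot_ge0. Qed.

Lemma enorm0 : enorm (0 : 'rV[R]_N) = 0.
Proof. by rewrite /enorm dot0l sqrtr0. Qed.

Lemma enorm_eq0 p : enorm p = 0 -> p = 0.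
Proof. by move=> p0; apply: dot_eq0; rewrite -enorm_sq p0 expr0n. Qed.

Lemma enormZ (c : R) p : enorm (c *: p) = `|c| * enorm p.
Proof. by rewrite /enorm dotZl dotZr mulrA -expr2 sqrtrM ?sqr_ge0 // sqrtr_sqr. Qed.

Lemma enormN p : enorm (- p) = enorm p.
Proof. by rewrite -scaleN1r enormZ normrN1 mul1r. Qed.

(* Cauchy-Schwarz, from the positivity of |q| p - |p| q. *)
Lemma cauchy_schwarz p q : dot p q <= enorm p * enorm q.
Proof.
have [/enorm_eq0 ->|pn0] := eqVneq (enorm p) 0; first by rewrite dot0l enorm0 mul0r.
have [/enorm_eq0 ->|qn0] := eqVneq (enorm q) 0.
  by rewrite dotC dot0l enorm0 mulr0.
have pq : 0 < enorm p * enorm q by rewrite mulr_gt0 // lt_def ?pn0 ?qn0 enorm_ge0.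
have := dot_ge0 (enorm q *: p - enorm p *: q).
rewrite dotBl !dotBr !dotZl !dotZr (dotC q p) -!enorm_sq => h.
rewrite -(ler_pM2l pq); nra.
Qed.

Lemma enorm_triangle p q : enorm (p + q) <= enorm p + enorm q.
Proof.
have cs := cauchy_schwarz p q.
rewrite -(ler_pXn2r (_ : (0 < 2)%N)) ?nnegrE ?addr_ge0 ?enorm_ge0 //.
rewrite enorm_sq dotDl !dotDr (dotC q p) sqrrD -!enorm_sq; lra.
Qed.

Lemma enorm_le_mx_norm w : enorm w <= N%:R * `|w|.
Proof.
have entry_le i : `|w 0 i| <= `|w|.
  rewrite [leRHS]/Num.Def.normr/= mx_normrE.
  exact: le_trans (le_bigmax _ _ (0, i)).
rewrite -(ler_pXn2r (_ : (0 < 2)%N)) ?nnegrE ?enorm_ge0 ?mulr_ge0 //.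
rewrite enorm_sq /dot.
apply: (@le_trans _ _ (\sum_(i < N) `|w| ^+ 2)).
  apply: ler_sum => i _; rewrite -expr2 -real_normK ?num_real //.
  by rewrite lerXn2r ?nnegrE ?entry_le.
rewrite sumr_const card_ord exprMn -[X in X <= _]mulr_natl ler_wpM2r ?sqr_ge0 //.
case: N w {entry_le} => [|n] w; first by rewrite expr0n.
by rewrite expr2 ler_peMr // ler1n.
Qed.

Lemma nbhs_enorm_ball (c y : 'rV[R]_N) (r : R) : enorm (y - c) < r ->
  nbhs y [set z | enorm (z - c) < r].
Proof.
move=> hy; rewrite -nbhs_nbhs_norm.
have hN : 0 < N%:R + 1 :> R by rewrite ltr_wpDl.
have e0 : 0 < (r - enorm (y - c)) / (N%:R + 1) by rewrite divr_gt0 ?subr_gt0.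
exists ((r - enorm (y - c)) / (N%:R + 1)) => // z /= hz.
have h1 : enorm (z - c) <= enorm (z - y) + enorm (y - c).
  by have := enorm_triangle (z - y) (y - c); rewrite addrA subrK.
have h2 := enorm_le_mx_norm (z - y).
rewrite -normrN opprB in h2.
have h3 : (N%:R + 1) * `|y - z| < r - enorm (y - c) by rewrite -ltr_pdivlMl // mulrC.
have h4 : N%:R * `|y - z| <= (N%:R + 1) * `|y - z| by rewrite ler_wpM2r // lerDl.
lra.
Qed.

Lemma enorm_ball_interior (S : set 'rV[R]_N) (c y : 'rV[R]_N) (r : R) :
  (forall z, enorm (z - c) < r -> S z) -> enorm (y - c) < r -> interior S y.
Proof. by move=> sub hy; apply: filterS (nbhs_enorm_ball hy). Qed.

End Euclid.

Lemma derive_line (R : realType) (N : nat) (z0 d : 'rV[R]_N) (t : R) :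
  'D_1 (fun s : R => z0 + s *: d) t = d.
Proof.
rewrite /derive; apply: cvg_lim; first exact: norm_hausdorff.
apply: cvg_near_cst; near=> h.
have hn0 : h != 0 by near: h; exact: nbhs_dnbhs_neq.
rewrite /= /shift /=; apply/rowP => i; rewrite !mxE /GRing.scale /= mulr1; field.
Unshelve. all: by end_near. Qed.

Lemma integral_le_length (R : realType) (T : R) (f : R -> \bar R) : 0 <= T ->
  (forall t, t \in `[0, T] -> (0 <= f t <= 1)%E) ->
  (\int[@lebesgue_measure R]_(t in `[0%R, T]%classic) f t <= T%:E)%E.
Proof.
move=> T0 hf.
have -> : T%:E = (\int[@lebesgue_measure R]_(t in `[0%R, T]%classic) (cst 1) t)%E.
  rewrite integral_cst ?mul1e; last exact: measurable_itv.
  have := lebesgue_measure_itv `[0%R, T]; rewrite /= lte_fin.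
  by case: ltgtP T0 => //= [_ _|<- _] ->; rewrite ?oppr0 ?adde0.
have f0 x : `[0%R, T]%classic x -> (0 <= f x)%E by move=> /hf /andP[].
have c0 x : `[0%R, T]%classic x -> (0 <= (cst 1 : R -> \bar R) x)%E by [].
rewrite (ge0_integralE (@lebesgue_measure R) f0).
rewrite (ge0_integralE (@lebesgue_measure R) c0).
apply: ereal_sup_le => _ [h /= hh <-]; exists h => //= x.
apply: le_trans (hh x) _; rewrite /patch.
by case: ifP => // /set_mem /hf /andP[].
Qed.

Section Sigma.
Variables (R : realType) (N : nat) (V : 'rV[R]_N -> 'rV[R]_N).
Local Open Scope ereal_scope.

(* 0 belongs to Z(z), so the support function sigma is nonnegative. *)
Lemma sigma_ge0 z q : 0 <= sigma V z q.
Proof.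
apply: le_ereal_sup_tmp; exists (dot 0 q)%:E; last by rewrite dot0l.
by exists 0%R => //; rewrite /Zset /Ham /= enorm0 dot0l addr0.
Qed.

(* A velocity within unit distance of the drift V(z) costs at most 1:
   for p in Z(z), p.q = p.V(z) + p.(q - V(z)) <= p.V(z) + |p| <= 1. *)
Lemma sigma_le1 z q : (enorm (q - V z) <= 1)%R -> sigma V z q <= 1.
Proof.
move=> hq; apply: ge_ereal_sup => _ [p /= hp <-]; rewrite lee_fin.
have := cauchy_schwarz p (q - V z); rewrite dotBr.
have : (enorm p * enorm (q - V z) <= enorm p)%R by rewrite ler_piMr ?enorm_ge0.
move: hp; rewrite /Zset /Ham /=; lra.
Qed.

Lemma S1_segment_le (z0 d : 'rV[R]_N) (T : R) : (0 <= T)%R ->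
  (forall t : R, (0 <= t <= T)%R -> (enorm (d - V (z0 + t *: d)) <= 1)%R) ->
  S1 V z0 (z0 + T *: d) <= T%:E.
Proof.
move=> T0 hd; set xi := fun s : R => (z0 + s *: d)%R.
have xi_curve : lip_curve T xi z0 (z0 + T *: d).
  split=> //; split; first by rewrite /xi scale0r addr0.
  split=> //; exists (enorm d) => s t _ _.
  by rewrite /xi opprD addrACA subrr add0r -scalerBl enormZ mulrC.
apply: le_trans (_ : ellV V T xi <= T%:E).
  by apply: ereal_inf_lbound; exists T, xi.
apply: integral_le_length => // t; rewrite in_itv /= => ht.
by rewrite derive_line sigma_ge0 sigma_le1 ?hd.
Qed.

End Sigma.

Lemma enorm_rescale_lt (R : realType) (N : nat) (T : R) (w : 'rV[R]_N) :
  0 < T -> enorm w < T / 2 -> enorm (T^-1 *: w) < 2^-1.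
Proof.
by move=> T0 hw; rewrite enormZ gtr0_norm ?invr_gt0 // mulrC ltr_pdivrMr // mulrC.
Qed.

Section Segments.
Variables (R : realType) (N : nat) (V : 'rV[R]_N -> 'rV[R]_N) (L : R).
Hypothesis hlip : lipschitz_with V L.
Variable P : 'rV[R]_N.
Implicit Types x y z d : 'rV[R]_N.

(* Admissible step durations: when |V(x)| <= A, a segment of duration T issued
   near x with velocity near V(x) is cheap as soon as T * step_const A < 1. *)
Definition step_const (A : R) : R := 2 * (1 + (L + enorm P) * (A + 1)).

Lemma step_const_ge2 (A : R) : 0 <= A -> 2 <= step_const A.
Proof.
have [L0 _] := hlip; have := enorm_ge0 P => P0 A0.
have : 0 <= (L + enorm P) * (A + 1) by rewrite mulr_ge0 // addr_ge0.
rewrite /step_const; lra.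
Qed.

Lemma drift_stable x z d : enorm (d - V x) < 2^-1 -> L * enorm (z - x) <= 2^-1 ->
  enorm (d - V z) <= 1.
Proof.
have [_ hL] := hlip; move=> hd hz.
have := enorm_triangle (d - V x) (V x - V z); rewrite addrA subrK.
by have := hL x z; rewrite -[x - z]opprB enormN; lra.
Qed.

Lemma step_const_small (T A e : R) : 0 < T -> 0 <= e <= A + 1 ->
  T * step_const A < 1 -> L * (T * e) <= 2^-1 /\ T + T * (enorm P * e) < 1.
Proof.
have [L0 _] := hlip; have P0 := enorm_ge0 P.
move=> T0 /andP[e0 eA]; rewrite /step_const => hT.
have h1 : L * (T * e) <= L * (T * (A + 1)) by rewrite ler_wpM2l // ler_wpM2l // ltW.
have h2 : enorm P * (T * e) <= enorm P * (T * (A + 1))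
  by rewrite ler_wpM2l // ler_wpM2l // ltW.
have A1 : 0 <= A + 1 by lra.
have h3 : 0 <= L * (T * (A + 1)) by rewrite !mulr_ge0 // ltW.
have h4 : 0 <= enorm P * (T * (A + 1)) by rewrite !mulr_ge0 // ltW.
have -> : T * (enorm P * e) = enorm P * (T * e) by ring.
have : T * (2 * (1 + (L + enorm P) * (A + 1)))
     = 2 * T + 2 * (L * (T * (A + 1))) + 2 * (enorm P * (T * (A + 1))) by ring.
split; lra.
Qed.

Lemma segment_cheap x z0 d (T A : R) : 0 < T -> enorm (V x) <= A ->
  T * step_const A < 1 -> enorm (d - V x) < 2^-1 ->
  (forall t, 0 <= t <= T -> enorm (z0 + t *: d - x) <= T * enorm d) ->
  (S1 V z0 (z0 + T *: d) + (dot P (- (T *: d)))%:E < 1%:E)%E.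
Proof.
have [L0 _] := hlip; move=> T0 hA hT hd hpath.
have e_le : 0 <= enorm d <= A + 1.
  rewrite enorm_ge0 /=.
  by have := enorm_triangle (d - V x) (V x); rewrite subrK; lra.
have [hLTe hsum] := step_const_small T0 e_le hT.
have cost : (S1 V z0 (z0 + T *: d) <= T%:E)%E.
  apply: S1_segment_le (ltW T0) _ => t ht; apply: drift_stable hd _.
  by apply: le_trans hLTe; rewrite ler_wpM2l ?hpath.
have gain : ((dot P (- (T *: d)))%:E <= (T * (enorm P * enorm d))%:E)%E.
  rewrite lee_fin dotNr dotZr -mulrN ler_wpM2l ?(ltW T0) //.
  by have := cauchy_schwarz (- P) d; rewrite enormN dotNl.
by apply: le_lt_trans (leeD cost gain) _; rewrite -EFinD lte_fin.
Qed.

Definition cheap_from x y := (S1 V x y + (dot P (x - y))%:E < 1%:E)%E.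
Definition cheap_to x y := (S1 V y x + (dot P (y - x))%:E < 1%:E)%E.

Lemma cheap_from_ball x (T A : R) : enorm (V x) <= A -> 0 < T ->
  T * step_const A < 1 ->
  forall y, enorm (y - (x + T *: V x)) < T / 2 -> cheap_from x y.
Proof.
move=> hA T0 hT y hy; have Tn0 : T != 0 by rewrite gt_eqF.
set d := T^-1 *: (y - x).
have Td : T *: d = y - x by rewrite /d scalerA divff ?scale1r.
have hd : enorm (d - V x) < 2^-1.
  have -> : d - V x = T^-1 *: (y - (x + T *: V x)).
    by apply/rowP => i; rewrite /d !mxE; field.
  exact: enorm_rescale_lt.
have end_y : x + T *: d = y by rewrite Td addrC subrK.
have := segment_cheap (z0 := x) T0 hA hT hd; rewrite end_y Td opprB; apply.
move=> t /andP[t0 tT]; rewrite addrC addKr enormZ ger0_norm //.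
by rewrite ler_wpM2r ?enorm_ge0.
Qed.

Lemma cheap_to_ball x (T A : R) : enorm (V x) <= A -> 0 < T ->
  T * step_const A < 1 ->
  forall y, enorm (y - (x - T *: V x)) < T / 2 -> cheap_to x y.
Proof.
move=> hA T0 hT y hy; have Tn0 : T != 0 by rewrite gt_eqF.
set d := T^-1 *: (x - y).
have Td : T *: d = x - y by rewrite /d scalerA divff ?scale1r.
have hd : enorm (d - V x) < 2^-1.
  have -> : d - V x = - (T^-1 *: (y - (x - T *: V x))).
    by apply/rowP => i; rewrite /d !mxE; field.
  by rewrite enormN; exact: enorm_rescale_lt.
have end_x : y + T *: d = x by rewrite Td addrC subrK.
have := segment_cheap (z0 := y) T0 hA hT hd; rewrite end_x Td opprB; apply.
move=> t /andP[t0 tT].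
have -> : y + t *: d - x = (t - T) *: d.
  by apply/rowP => i; rewrite /d !mxE; field.
rewrite enormZ ler_wpM2r ?enorm_ge0 // ler0_norm ?subr_le0 //; lra.
Qed.

End Segments.

Lemma small_step_in_nbhs (R : realType) (N : nat) (x v : 'rV[R]_N) (M : R)
    (B : set 'rV[R]_N) : 0 < M -> nbhs x B ->
  exists T, [/\ 0 < T, T * M < 1, B (x + T *: v) & B (x - T *: v)].
Proof.
move=> M0; rewrite -nbhs_nbhs_norm => -[e /= e0 hB].
set Q := M + `|v| / e.
have ve0 : 0 <= `|v| / e by rewrite divr_ge0 // ltW.
have Q0 : 0 < Q by rewrite /Q; lra.
have TQ : (2 * Q)^-1 * Q = 2^-1 by field; lra.
have T0 : 0 < (2 * Q)^-1 by rewrite invr_gt0; lra.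
have TM : (2 * Q)^-1 * M <= 2^-1 by rewrite -TQ ler_wpM2l ?(ltW T0) // lerDl.
have Tv : (2 * Q)^-1 * `|v| < e.
  have : (2 * Q)^-1 * (`|v| / e) <= 2^-1.
    by rewrite -TQ ler_wpM2l ?(ltW T0) // lerDr ltW.
  by rewrite mulrA ler_pdivrMr //; lra.
exists (2 * Q)^-1; split=> //; first lra.
- apply: hB; rewrite /ball_ /= opprD addrA subrr add0r normrN normrZ.
  by rewrite gtr0_norm.
- apply: hB; rewrite /ball_ /= opprB addrC subrK normrZ.
  by rewrite gtr0_norm.
Qed.

Section Covering.
Variables (R : realType) (N : nat) (V : 'rV[R]_N -> 'rV[R]_N) (L : R).
Hypothesis hlip : lipschitz_with V L.
Variable P : 'rV[R]_N.
Implicit Types x y : 'rV[R]_N.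

(* x lies in the closure of the interior of the cheap endpoints: short drift
   steps from x land in that interior and approach x. *)
Lemma cheap_from_interior_closure x : closure (interior (cheap_from V P x)) x.
Proof.
have M0 : 0 < step_const L P (enorm (V x)).
  by have := step_const_ge2 hlip P (enorm_ge0 (V x)); lra.
move=> B /(small_step_in_nbhs (V x) M0) [T [T0 TM Bfwd _]].
exists (x + T *: V x); split=> //.
apply: (enorm_ball_interior (c := x + T *: V x) (r := T / 2)).
  exact: cheap_from_ball (lexx _) T0 TM.
by rewrite subrr enorm0 divr_gt0.
Qed.

(* Likewise with backward drift steps for the cheap starting points. *)
Lemma cheap_to_interior_closure x : closure (interior (cheap_to V P x)) x.
Proof.
have M0 : 0 < step_const L P (enorm (V x)).
  by have := step_const_ge2 hlip P (enorm_ge0 (V x)); lra.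
move=> B /(small_step_in_nbhs (V x) M0) [T [T0 TM _ Bbwd]].
exists (x - T *: V x); split=> //.
apply: (enorm_ball_interior (c := x - T *: V x) (r := T / 2)).
  exact: cheap_to_ball (lexx _) T0 TM.
by rewrite subrr enorm0 divr_gt0.
Qed.

(* A step duration at y short enough for the drift to change by at most 1/4
   along the step, while still admissible for the bound |V| <= |V(y)| + 1. *)
Definition cover_time y : R := (2 * step_const L P (enorm (V y) + 1))^-1.

Lemma cover_time_admissible y :
  0 < cover_time y /\ cover_time y * step_const L P (enorm (V y) + 1) < 1.
Proof.
set M := step_const L P (enorm (V y) + 1).
have M2 : 2 <= M by apply: (step_const_ge2 hlip); rewrite addr_ge0 ?enorm_ge0.
rewrite /cover_time -/M; split; first by rewrite invr_gt0; lra.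
have -> : (2 * M)^-1 * M = 2^-1 by field; lra.
lra.
Qed.

Lemma drift_moves_little y (u : R) : `|u| <= cover_time y ->
  enorm (V (y + u *: V y) - V y) <= 4^-1.
Proof.
have [L0 hL] := hlip; have P0 := enorm_ge0 P; have e0 := enorm_ge0 (V y).
set e := enorm (V y); set M := step_const L P (e + 1) => hu.
have [s0 sM] := cover_time_admissible y; rewrite -/e -/M in sM.
have Le : L * e <= M / 2.
  have h1 : L * e <= L * (e + 1 + 1) by rewrite ler_wpM2l // -addrA lerDl.
  have h2 : 0 <= enorm P * (e + 1 + 1) by rewrite mulr_ge0 // !addr_ge0.
  have -> : M / 2 = 1 + L * (e + 1 + 1) + enorm P * (e + 1 + 1).
    by rewrite /M /step_const; field.
  lra.
have := hL (y + u *: V y) y; rewrite addrAC subrr add0r enormZ -/e => h.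
apply: le_trans h _; rewrite mulrCA.
have Lu : `|u| * (L * e) <= cover_time y * (M / 2).
  by apply: ler_pM; rewrite ?mulr_ge0.
have M2 : 2 <= M by apply: (step_const_ge2 hlip); rewrite addr_ge0.
apply: le_trans Lu _; rewrite /cover_time -/M -/e.
by rewrite [leLHS](_ : _ = 4^-1) //; field; lra.
Qed.

(* Every y is a cheap endpoint for the point x reached from y by following the
   drift backwards for the cover time. *)
Lemma cheap_from_cover : \bigcup_x interior (cheap_from V P x) = [set: 'rV[R]_N].
Proof.
apply/seteqP; split=> // y _; have [s0 sM] := cover_time_admissible y.
set s := cover_time y in s0 sM *; set x := y - s *: V y.
have hd : enorm (V x - V y) <= 4^-1.
  by rewrite /x -scaleNr; apply: drift_moves_little; rewrite normrN gtr0_norm.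
have hA : enorm (V x) <= enorm (V y) + 1.
  by have := enorm_triangle (V x - V y) (V y); rewrite subrK; lra.
exists x => //; apply: (enorm_ball_interior (c := x + s *: V x) (r := s / 2)).
  exact: cheap_from_ball hA s0 sM.
have -> : y - (x + s *: V x) = - (s *: (V x - V y)).
  by apply/rowP => i; rewrite /x !mxE; ring.
rewrite enormN enormZ gtr0_norm //.
have : s * enorm (V x - V y) <= s * 4^-1 by rewrite ler_wpM2l // ltW.
lra.
Qed.

(* Symmetrically, following the drift forward from y gives a point x for which
   y is a cheap starting point. *)
Lemma cheap_to_cover : \bigcup_x interior (cheap_to V P x) = [set: 'rV[R]_N].
Proof.
apply/seteqP; split=> // y _; have [s0 sM] := cover_time_admissible y.
set s := cover_time y in s0 sM *; set x := y + s *: V y.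
have hd : enorm (V x - V y) <= 4^-1.
  by apply: drift_moves_little; rewrite gtr0_norm.
have hA : enorm (V x) <= enorm (V y) + 1.
  by have := enorm_triangle (V x - V y) (V y); rewrite subrK; lra.
exists x => //; apply: (enorm_ball_interior (c := x - s *: V x) (r := s / 2)).
  exact: cheap_to_ball hA s0 sM.
have -> : y - (x - s *: V x) = s *: (V x - V y).
  by apply/rowP => i; rewrite /x !mxE; ring.
rewrite enormZ gtr0_norm //.
have : s * enorm (V x - V y) <= s * 4^-1 by rewrite ler_wpM2l // ltW.
lra.
Qed.

End Covering.

Lemma one_le_threshold (R : realType) (N : nat) (P : 'rV[R]_N) (L delta : R) :
  0 <= L -> delta < 1 -> (1%:E <= 1%:E + (enorm P)%:E * rV L delta)%E.
Proof.
move=> L0 d1; rewrite leeDl // mule_ge0 ?lee_fin ?enorm_ge0 //.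
by rewrite /rV; case: eqP => // _; rewrite lee_fin divr_ge0 // subr_ge0 ltW.
Qed.

Theorem lemma5p3 (R : realType) (N : nat) (V : 'rV[R]_N -> 'rV[R]_N) (L : R)
  (hper : Zperiodic V) (hlip : lipschitz_with V L)
  (P : 'rV[R]_N) (delta : R) (hdelta : 0 < delta < 1) :
  exists U W : 'rV[R]_N -> set 'rV[R]_N,
    (forall x : 'rV[R]_N,
      [/\ open (U x) /\ open (W x),
          closure (U x) x /\ closure (W x) x,
          (forall y, U x y ->
             (S1 V x y + (dot P (x - y))%:E < 1%:E + (enorm P)%:E * rV L delta)%E)
        & (forall y, W x y ->
             (S1 V y x + (dot P (y - x))%:E < 1%:E + (enorm P)%:E * rV L delta)%E)])
    /\ \bigcup_x U x = [set: 'rV[R]_N] /\ \bigcup_x W x = [set: 'rV[R]_N].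
Proof.
have one_le := one_le_threshold P (proj1 hlip) (proj2 (andP hdelta)).
exists (fun x => interior (cheap_from V P x)), (fun x => interior (cheap_to V P x)).
split; [move=> x; split | split].
- by split; exact: open_interior.
- split; first exact: (cheap_from_interior_closure hlip P).
  exact: (cheap_to_interior_closure hlip P).
- by move=> y /nbhs_singleton /lt_le_trans; apply.
- by move=> y /nbhs_singleton /lt_le_trans; apply.
- exact: (cheap_from_cover hlip).
- exact: (cheap_to_cover hlip).
Qed.
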